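(* Let $\mathcal G$ be a CFG and $\sigma$ a state of $\mathcal G$ with $\Pr_{term}(\mathcal G(\sigma))>0$. Then there is $N\in\mathbb N$ such that for every scheduler $\mathfrak s$ there exists a finite path of length at most $N$ that starts at $\sigma$, ends at the terminal state $\sigma_\bot$, and is consistent with $\mathfrak s$. In other words, the length of the shortest terminating finite path from $\sigma$ consistent with $\mathfrak s$ is bounded uniformly over all schedulers $\mathfrak s$.
   Context: A probabilistic control flow graph (CFG) is a tuple $\mathcal G=(L,V,l_{init},\mathbf x_{init},\mapsto,G,\mathsf{Pr},\mathsf{Upd})$. Here $L$ is a finite set of locations, partitioned into assignment, nondeterministic and probabilistic locations. $V=\{x_1,\dots,x_n\}$ is a finite set of variables ranging over $\mathbb Q$. $l_{init}\in L$ and $\mathbf x_{init}\in\mathbb Q^V$. $\mapsto\subseteq L\times L$ is a finite set of transitions. $G$ assigns to each transition a Boolean guard, namely a Boolean combination of arithmetic atomic formulas over the variables. $\mathsf{Pr}$ assigns to each transition leaving a probabilistic location a rational arithmetic expression over $V$; at every valuation each of these values is $>0$, and the values of the enabled outgoing transitions sum to $1$. $\mathsf{Upd}$ assigns to each transition leaving an assignment location an update $(j,u)$, with $u$ an arithmetic expression; assignment locations have at most one outgoing transition. A state is a pair $(l,\mathbf x)$. A transition $(l,l')$ is enabled at $(l,\mathbf x)$ if its guard holds there; in that case $(l',\mathbf x')$ is a successor, where $\mathbf x'=\mathbf x$, except that for an assignment location $\mathbf x'[j]=u(\mathbf x)$. Every state has at least one, and hence finitely many, successors. A finite path is a sequence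 of states in which each state is a successor of the previous one. A run is an infinite such sequence starting at the initial state. A scheduler $\mathfrak s$ maps each finite path ending at a nondeterministic state to a successor of that state; no measurability restriction is imposed. A path is consistent with $\mathfrak s$ if every nondeterministic step in it follows $\mathfrak s$. Each scheduler $\mathfrak s$ induces a probability measure $\mathbb P_{\mathfrak s}$ on runs, generated by cylinder sets: probabilistic states move to successors with probabilities given by $\mathsf{Pr}$, and nondeterministic choices follow $\mathfrak s$. $\mathcal G(\sigma)$ denotes $\mathcal G$ with initial state $\sigma$. There is a distinguished terminal state $\sigma_\bot=(l_{out},\mathbf 0)$. The termination probability is $\Pr_{term}(\mathcal G)=\inf_{\mathfrak s}\mathbb P_{\mathfrak s}[\Diamond\sigma_\bot]$, where $\Diamond\sigma_\bot$ is the set of runs that visit $\sigma_\bot$. *)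

From mathcomp Require Import all_boot all_order all_algebra.
From mathcomp Require Import classical_sets reals constructive_ereal ereal.
Set Implicit Arguments. Unset Strict Implicit. Unset Printing Implicit Defensive.
Import Order.TTheory GRing.Theory Num.Theory.
Local Open Scope ring_scope.

Definition valuation (nv : nat) := {ffun 'I_nv -> rat}.

Inductive aexpr (nv : nat) :=
| AConst of rat
| AVar of 'I_nv
| AAdd of aexpr nv & aexpr nv
| ASub of aexpr nv & aexpr nv
| AMul of aexpr nv & aexpr nv
| ADiv of aexpr nv & aexpr nv.

Fixpoint aeval nv (e : aexpr nv) (x : valuation nv) : rat :=
  match e with
  | AConst q => q
  | AVar i => x i
  | AAdd a b => aeval a x + aeval b x
  | ASub a b => aeval a x - aeval b x
  | AMul a b => aeval a x * aeval b x
  | ADiv a b => aeval a x / aeval b x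
  end.

Inductive bexpr (nv : nat) :=
| BTrue
| BLe of aexpr nv & aexpr nv
| BLt of aexpr nv & aexpr nv
| BEq of aexpr nv & aexpr nv
| BNot of bexpr nv
| BAnd of bexpr nv & bexpr nv
| BOr of bexpr nv & bexpr nv.

Fixpoint beval nv (b : bexpr nv) (x : valuation nv) : bool :=
  match b with
  | BTrue => true
  | BLe a c => aeval a x <= aeval c x
  | BLt a c => aeval a x < aeval c x
  | BEq a c => aeval a x == aeval c x
  | BNot b => ~~ beval b x
  | BAnd b c => beval b x && beval c x
  | BOr b c => beval b x || beval c x
  end.

Inductive loc_kind := KAssign | KNondet | KProb.

(* A probabilistic CFG (L, V, l_init, x_init, |->, G, Pr, Upd), together with
   the distinguished terminal location l_out. *)
Record cfg (nv : nat) := CFG {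
  L : finType;
  kind : L -> loc_kind;          (* partition of L *)
  l_init : L;
  x_init : valuation nv;
  trans : rel L;
  guard : L -> L -> bexpr nv;
  prob : L -> L -> aexpr nv;     (* used on transitions out of prob. locations *)
  upd : L -> L -> 'I_nv * aexpr nv; (* used on transitions out of assignment locations *)
  l_out : L
}.
Arguments L {nv} c.
Arguments kind {nv} c _.
Arguments trans {nv} c _ _.
Arguments guard {nv} c _ _.
Arguments prob {nv} c _ _.
Arguments upd {nv} c _ _.
Arguments l_out {nv} c.

Section CFGSem.
Variables (nv : nat) (G : cfg nv).

Definition state := (L G * valuation nv)%type.

Definition enabled (l l' : L G) (x : valuation nv) : bool :=
  trans G l l' && beval (guard G l l') x.

Definition upd_val (ju : 'I_nv * aexpr nv) (x : valuation nv) : valuation nv :=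
  [ffun k => if k == ju.1 then aeval ju.2 x else x k].

Definition succ (s s' : state) : bool :=
  enabled s.1 s'.1 s.2 &&
  (s'.2 == if kind G s.1 is KAssign then upd_val (upd G s.1 s'.1) s.2 else s.2).

Definition wf_cfg : Prop :=
  [/\ (forall l l' x, kind G l = KProb -> trans G l l' -> 0 < aeval (prob G l l') x),
      (forall l x, kind G l = KProb ->
         \sum_(l' | enabled l l' x) aeval (prob G l l') x = 1),
      (forall l l1 l2, kind G l = KAssign -> trans G l l1 -> trans G l l2 -> l1 = l2)
    & (forall s : state, exists s' : state, succ s s')].

Definition sigma_bot : state := (l_out G, [ffun => 0]).

Definition is_nondet (s : state) : bool := if kind G s.1 is KNondet then true else false.

Definition fpath_from (sigma : state) (p : seq state) : Prop :=
  exists q, p = sigma :: q /\ path succ sigma q.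

Record scheduler (sigma : state) := Scheduler {
  sched :> seq state -> state;
  schedP : forall q, path succ sigma q -> is_nondet (last sigma q) ->
             succ (last sigma q) (sched (sigma :: q))
}.

Definition consistent (sigma : state) (s : scheduler sigma) (p : seq state) :=
  forall i, (i.+1 < size p)%N -> is_nondet (nth sigma p i) ->
    nth sigma p i.+1 = s (take i.+1 p).

(* Probability, under s, of visiting sigma_bot within n further steps,
   given the history h (previous states) and current state c. *)
Fixpoint reach (sigma : state) (s : scheduler sigma) (n : nat)
    (h : seq state) (c : state) : rat :=
  if c == sigma_bot then 1 else
  match n with
  | 0 => 0
  | n'.+1 =>
    match kind G c.1 with
    | KNondet => reach s n' (rcons h c) (s (rcons h c))
    | KProb => \sum_(l' | enabled c.1 l' c.2)
                 aeval (prob G c.1 l') c.2 * reach s n' (rcons h c) (l', c.2)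
    | KAssign => \sum_(l' | enabled c.1 l' c.2)
                 reach s n' (rcons h c) (l', upd_val (upd G c.1 l') c.2)
    end
  end.

Local Open Scope ereal_scope.

(* P_s[<> sigma_bot] in G(sigma): measure of the increasing union of the
   events "sigma_bot visited within n steps" *)
Definition prob_reach (R : realType) (sigma : state) (s : scheduler sigma)
  : \bar R :=
  ereal_sup (range (fun n => (ratr (reach s n [::] sigma) : R)%:E)).

Definition Pr_term (R : realType) (sigma : state) : \bar R :=
  ereal_inf (range (fun s : scheduler sigma => prob_reach R s)).

End CFGSem.

From mathcomp Require Import all_boot all_order all_algebra.
From mathcomp Require Import classical_sets reals constructive_ereal ereal.
From mathcomp Require Import boolp.
Set Implicit Arguments. Unset Strict Implicit.
Import Order.TTheory GRing.Theory Num.Theory.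
Local Open Scope ring_scope.

(* Play a game in which the scheduler resolves nondeterministic states and an
   adversary picks the successor of every other state.  If some horizon N is
   not avoidable from sigma, i.e. the scheduler cannot keep away from
   sigma_bot for N steps, then against any scheduler the adversary builds a
   consistent terminating path of length at most N.  Otherwise every horizon is
   avoidable; since each state has finitely many successors, a König argument
   shows that the states avoiding every horizon are closed under a scheduler
   choice at nondeterministic states and under all other successors.  The
   memoryless scheduler staying in that set never reaches sigma_bot, so
   Pr_term is 0. *)

Section AvoidanceGame.
Variables (nv : nat) (G : cfg nv).

Fixpoint avoids (n : nat) (c : state G) : Prop :=
  c <> sigma_bot G /\
  match n with
  | 0 => True
  | n'.+1 => if is_nondet c then exists2 c', succ c c' & avoids n' c'
             else forall c', succ c c' -> avoids n' c'
  end.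

Definition avoids_forever (c : state G) : Prop := forall n, avoids n c.

Lemma avoids_le m n c : (m <= n)%N -> avoids n c -> avoids m c.
Proof.
elim: n m c => [|n IH] [|m] c //= le_mn [nbot avoid_c]; split=> //.
case: (is_nondet c) avoid_c => [[c' succ_c' avoid_c']|avoid_c].
  by exists c'; last exact: IH avoid_c'.
by move=> c' /avoid_c; apply: IH.
Qed.

Lemma consistent_rcons (sigma : state G) (s : scheduler sigma) q c' :
  consistent s (sigma :: q) ->
  (is_nondet (last sigma q) -> c' = s (sigma :: q)) ->
  consistent s (sigma :: rcons q c').
Proof.
move=> cons_q cons_c' i; rewrite -rcons_cons size_rcons ltnS leq_eqVlt.
case/orP=> [/eqP[->]|lt_i].
  have last_q : nth sigma (sigma :: q) (size q) = last sigma q by exact: nth_last.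
  rewrite !nth_rcons /= ltnSn ltnn eqxx last_q => /cons_c' ->.
  by rewrite -cats1 takel_cat // take_size.
rewrite !nth_rcons (ltn_trans (ltnSn _) lt_i) lt_i -cats1 takel_cat ?(ltnW lt_i) //.
exact: cons_q.
Qed.

Lemma not_avoids_succ (sigma : state G) (s : scheduler sigma) q n :
  path (@succ _ G) sigma q -> last sigma q <> sigma_bot G ->
  ~ avoids n.+1 (last sigma q) ->
  exists c', [/\ succ (last sigma q) c', ~ avoids n c'
               & is_nondet (last sigma q) -> c' = s (sigma :: q)].
Proof.
move=> path_q nbot /=; case nd: (is_nondet (last sigma q)) => not_avoid.
  have succ_s := schedP s path_q nd.
  exists (s (sigma :: q)); split=> // avoid_s.
  by apply: not_avoid; split=> //; exists (s (sigma :: q)).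
apply: contrapT => /forallNP no_c'; apply: not_avoid; split=> // c' succ_c'.
by apply: contrapT => not_avoid_c'; apply: (no_c' c').
Qed.

Lemma consistent_path_to_bot (sigma : state G) (s : scheduler sigma) n q :
  path (@succ _ G) sigma q -> consistent s (sigma :: q) ->
  ~ avoids n (last sigma q) ->
  exists q', [/\ path (@succ _ G) sigma q', consistent s (sigma :: q'),
                 last sigma q' = sigma_bot G & (size q' <= size q + n)%N].
Proof.
elim: n q => [|n IH] q path_q cons_q not_avoid.
  by exists q; rewrite addn0; split=> //; apply: contrapT => nbot; apply: not_avoid.
have [bot|nbot] := eqVneq (last sigma q) (sigma_bot G).
  by exists q; rewrite leq_addr.
have [c' [succ_c' not_avoid_c' cons_c']] :=
  not_avoids_succ s path_q (elimN eqP nbot) not_avoid.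
have path_qc' : path (@succ _ G) sigma (rcons q c') by rewrite rcons_path path_q.
have [|q' [path_q' cons_q' bot_q' size_q']] :=
  IH _ path_qc' (consistent_rcons cons_q cons_c'); first by rewrite last_rcons.
by exists q'; rewrite (leq_trans size_q') // size_rcons addSnnS.
Qed.

Lemma not_avoids_terminating_path (sigma : state G) N : ~ avoids N sigma ->
  forall s : scheduler sigma, exists p : seq (state G),
    [/\ fpath_from sigma p, last sigma p = sigma_bot G,
        (size p <= N.+1)%N & consistent s p].
Proof.
move=> not_avoid s; have cons0 : consistent s [:: sigma] by case.
have [q [path_q cons_q bot_q size_q]] :=
  consistent_path_to_bot (q := [::]) isT cons0 not_avoid.
by exists (sigma :: q); split=> //; exists q.
Qed.

Definition succ_along (c : state G) (l' : L G) : state G :=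
  (l', if kind G c.1 is KAssign then upd_val (upd G c.1 l') c.2 else c.2).

Lemma succ_alongE c c' : succ c c' -> c' = succ_along c c'.1.
Proof. by case/andP=> _ /eqP; case: c' => l x /= ->. Qed.

Lemma avoids_forever_nondet c : avoids_forever c -> is_nondet c ->
  exists2 c', succ c c' & avoids_forever c'.
Proof.
move=> avoid_c nd; apply: contrapT => no_c'.
have horizon l' : exists n, ~ (succ c (succ_along c l') /\ avoids n (succ_along c l')).
  apply/existsNP => avoid_l'; apply: no_c'; exists (succ_along c l').
    by case: (avoid_l' 0%N).
  by move=> n; case: (avoid_l' n).
have [f f_horizon] := choice horizon.
have [_] := avoid_c (\max_l' f l').+1; rewrite nd => -[c' succ_c' avoid_c'].
apply: (f_horizon c'.1); rewrite -(succ_alongE succ_c'); split=> //.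
exact: avoids_le (leq_bigmax _) avoid_c'.
Qed.

Lemma avoids_forever_det c c' : avoids_forever c -> ~~ is_nondet c ->
  succ c c' -> avoids_forever c'.
Proof.
by move=> avoid_c nd succ_c' n; have [_] := avoid_c n.+1; rewrite (negbTE nd); apply.
Qed.

Lemma avoiding_strategy : (forall c : state G, exists c', succ c c') ->
  exists f : state G -> state G, forall c,
    succ c (f c) /\ (is_nondet c -> avoids_forever c -> avoids_forever (f c)).
Proof.
move=> succ_total.
suff step c : exists c',
    succ c c' /\ (is_nondet c -> avoids_forever c -> avoids_forever c').
  by have [f f_step] := choice step; exists f.
have [[avoid_c nd]|not_both] := pselect (avoids_forever c /\ is_nondet c).
  by have [c' succ_c' avoid_c'] := avoids_forever_nondet avoid_c nd; exists c'.
have [c' succ_c'] := succ_total c.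
by exists c'; split=> // nd avoid_c; case: not_both.
Qed.

Lemma reach_avoids_forever (sigma : state G) (s : scheduler sigma) :
  (forall h c, is_nondet c -> avoids_forever c -> avoids_forever (s (rcons h c))) ->
  forall n h c, avoids_forever c -> reach s n h c = 0.
Proof.
move=> s_avoids; elim=> [|n IH] h c avoid_c /=;
  have /eqP/negbTE -> := proj1 (avoid_c 0%N) => //.
have det_succ l' : enabled c.1 l' c.2 -> ~~ is_nondet c ->
    avoids_forever (succ_along c l').
  by move=> en nd; apply: avoids_forever_det avoid_c nd _; rewrite /succ en eqxx.
rewrite /succ_along /is_nondet in det_succ s_avoids *.
case kc: (kind G c.1) det_succ => det_succ.
- by rewrite big1 // => l' en; apply: IH; apply: det_succ; rewrite ?kc.
- by apply: IH; apply: s_avoids; rewrite ?kc.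
- by rewrite big1 // => l' en; rewrite IH ?mulr0 //; apply: det_succ; rewrite ?kc.
Qed.

Lemma avoiding_scheduler (sigma : state G) :
  (forall c : state G, exists c', succ c c') -> avoids_forever sigma ->
  exists s : scheduler sigma, forall n, reach s n [::] sigma = 0.
Proof.
move=> succ_total avoid_sigma; have [f f_avoids] := avoiding_strategy succ_total.
pose sched (p : seq (state G)) := f (last sigma p).
have schedP q : path (@succ _ G) sigma q -> is_nondet (last sigma q) ->
    succ (last sigma q) (sched (sigma :: q)).
  by move=> _ _; case: (f_avoids (last sigma q)).
exists (Scheduler schedP) => n; apply: reach_avoids_forever => // h c nd avoid_c /=.
by rewrite /sched last_rcons; case: (f_avoids c) => _; apply.
Qed.

End AvoidanceGame.

Lemma Pr_term_le0 (R : realType) nv (G : cfg nv) (sigma : state G)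
    (s : scheduler sigma) :
  (forall n, reach s n [::] sigma = 0) -> (Pr_term R sigma <= 0)%E.
Proof.
move=> reach0; apply: (@le_trans _ _ (prob_reach R s)).
  by apply: ereal_inf_lbound; exists s.
by apply: ge_ereal_sup => _ [n _ <-]; rewrite reach0 rmorph0.
Qed.

Theorem mainTheorem1 (R : realType) (nv : nat) (G : cfg nv)
    (wfG : wf_cfg G) (sigma : state G) :
  (0 < Pr_term R sigma)%E ->
  exists N : nat, forall s : scheduler sigma,
    exists p : seq (state G),
      [/\ fpath_from sigma p, last sigma p = sigma_bot G,
          (size p <= N.+1)%N & consistent s p].
Proof.
move=> Pr_pos.
have [[N not_avoid]|all_avoided] := pselect (exists N, ~ avoids N sigma).
  by exists N; apply: not_avoids_terminating_path.
have avoid_sigma : avoids_forever sigma.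
  by move=> n; apply: contrapT => not_avoid; apply: all_avoided; exists n.
have [_ _ _ succ_total] := wfG.
have [s reach0] := avoiding_scheduler succ_total avoid_sigma.
by have := Pr_term_le0 R reach0; rewrite leNgt Pr_pos.
Qed.
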